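(* Let $Y,\widetilde Y\in\mathbb{R}^{m\times N}$ with all columns $\widetilde Y_t$ nonzero, let $w\in\mathbb{R}^N$, $\delta>0$, and let $U_1,\dots,U_N$ be i.i.d. uniform random variables on $[0,1)$. Define the randomized rounding $\mathcal{Q}(z;U)=\delta\bigl(\lfloor z/\delta\rfloor+\mathbf 1\{U< z/\delta-\lfloor z/\delta\rfloor\}\bigr)$ (this is the stochastic quantizer onto $\{k\delta:k\in\mathbb Z\}$). (Basic SPFQ) Set $u_0=0\in\mathbb{R}^m$ and for $t=1,\dots,N$: $q_t=\mathcal{Q}\bigl(\langle \widetilde Y_t,u_{t-1}+w_tY_t\rangle/\|\widetilde Y_t\|_2^2;U_t\bigr)$, $u_t=u_{t-1}+w_tY_t-q_t\widetilde Y_t$. (Phase I) Set $\hat u_0=0$ and for $t=1,\dots,N$: $\widetilde w_t=\langle\widetilde Y_t,\hat u_{t-1}+w_tY_t\rangle/\|\widetilde Y_t\|_2^2$, $\hat u_t=\hat u_{t-1}+w_tY_t-\widetilde w_t\widetilde Y_t$. (Phase II) Set $\widetilde u_0=0$ and for $t=1,\dots,N$: $\widetilde q_t=\mathcal{Q}\bigl(\widetilde w_t+\langle\widetilde Y_t,\widetilde u_{t-1}\rangle/\|\widetilde Y_t\|_2^2;U_t\bigr)$, $\widetilde u_t=\widetilde u_{t-1}+(\widetilde w_t-\widetilde q_t)\widetilde Y_t$. Then $\widetilde q=q$ (for every realization of $U_1,\dots,U_N$); consequently $Yw-\widetilde Yq=\hat u_N+\widetilde u_N$.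
   Context: $\langle\cdot,\cdot\rangle$ is the Euclidean inner product on $\mathbb{R}^m$; $\widetilde Y_t$ denotes the $t$-th column of $\widetilde Y$, and similarly $Y_t$. *)

From HB Require Import structures.
From mathcomp Require Import all_boot all_order all_algebra.
From mathcomp Require Import all_classical all_reals.
Set Implicit Arguments. Unset Strict Implicit. Unset Printing Implicit Defensive.
Import Order.TTheory GRing.Theory Num.Theory.
Local Open Scope ring_scope.

Section SPFQ.
Variables (R : realType) (m N : nat).

Definition dotv (u v : 'cV[R]_m) : R := (u^T *m v) 0 0.

Definition stoch_round (delta z U : R) : R :=
  let fl : R := (Num.floor (z / delta))%:~R in
  delta * (fl + (if U < z / delta - fl then 1 else 0)).

(* 0-based access: step t (t = 0..N-1) corresponds to the paper's t+1.
   Out-of-range indices give 0 (never used for t < N). *)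
Definition ncol (A : 'M[R]_(m, N)) (t : nat) : 'cV[R]_m :=
  if (insub t : option 'I_N) is Some j then col j A else 0.
Definition nent (w : 'cV[R]_N) (t : nat) : R :=
  if (insub t : option 'I_N) is Some j then w j 0 else 0.
Definition nfun (U : 'I_N -> R) (t : nat) : R :=
  if (insub t : option 'I_N) is Some j then U j else 0.

Variables (Y Yt : 'M[R]_(m, N)) (w : 'cV[R]_N) (delta : R) (U : 'I_N -> R).

Let y t := ncol Y t.
Let yt t := ncol Yt t.
Let wt t := nent w t.
Let Ut t := nfun U t.

(* Basic SPFQ: u_basic k = u_k (after k steps); q_basic t = q_{t+1}. *)
Fixpoint u_basic (k : nat) : 'cV[R]_m :=
  match k with
  | 0 => 0
  | k'.+1 =>
      let v := u_basic k' + wt k' *: y k' in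
      v - stoch_round delta (dotv (yt k') v / dotv (yt k') (yt k')) (Ut k') *: yt k'
  end.
Definition q_basic (t : nat) : R :=
  stoch_round delta
    (dotv (yt t) (u_basic t + wt t *: y t) / dotv (yt t) (yt t)) (Ut t).

(* Phase I: u_hat k = \hat u_k; w_tilde t = \widetilde w_{t+1}. *)
Fixpoint u_hat (k : nat) : 'cV[R]_m :=
  match k with
  | 0 => 0
  | k'.+1 =>
      let v := u_hat k' + wt k' *: y k' in
      v - (dotv (yt k') v / dotv (yt k') (yt k')) *: yt k'
  end.
Definition w_tilde (t : nat) : R :=
  dotv (yt t) (u_hat t + wt t *: y t) / dotv (yt t) (yt t).

(* Phase II: u_tilde k = \widetilde u_k; q_tilde t = \widetilde q_{t+1}. *)
Fixpoint u_tilde (k : nat) : 'cV[R]_m :=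
  match k with
  | 0 => 0
  | k'.+1 =>
      u_tilde k' + (w_tilde k' - stoch_round delta
        (w_tilde k' + dotv (yt k') (u_tilde k') / dotv (yt k') (yt k')) (Ut k'))
        *: yt k'
  end.
Definition q_tilde (t : nat) : R :=
  stoch_round delta (w_tilde t + dotv (yt t) (u_tilde t) / dotv (yt t) (yt t)) (Ut t).

Definition q_vec : 'cV[R]_N := \col_(j < N) q_basic j.

End SPFQ.

From HB Require Import structures.
From mathcomp Require Import all_boot all_order all_algebra.
From mathcomp Require Import all_classical all_reals.
Import Order.TTheory GRing.Theory Num.Theory.
Local Open Scope ring_scope.

(* Invariant: after every step k the basic state splits as
        u_basic k = u_hat k + u_tilde k.
   Given the invariant at step k, the rounding arguments of the basic and
   the two-phase algorithm agree, because <Yt_k, .> is additive: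
        <Yt_k, u_hat k + w_k Y_k>/|Yt_k|^2 + <Yt_k, u_tilde k>/|Yt_k|^2
      = <Yt_k, u_basic k + w_k Y_k>/|Yt_k|^2,
   so the same rounded value q_k is produced (same uniform U_k), and the
   updates of the three states then show the invariant at step k+1.
   Unrolling the basic recursion gives u_basic N = Y w - Yt q, which with
   the invariant at k = N yields the second claim. *)

Lemma dotvDr (R : realType) (m : nat) (c a b : 'cV[R]_m) :
  dotv c (a + b) = dotv c a + dotv c b.
Proof. by rewrite /dotv mulmxDr mxE. Qed.

Lemma mulmx_sum_col (R : comPzRingType) (m n : nat) (A : 'M[R]_(m, n))
    (v : 'cV[R]_n) :
  A *m v = \sum_(j < n) v j 0 *: col j A.
Proof.
apply/matrixP => i k; rewrite !mxE summxE (ord1 k).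
by apply: eq_bigr => j _; rewrite !mxE mulrC.
Qed.

Section TwoPhaseSPFQ.
Variables (R : realType) (m N : nat) (Y Yt : 'M[R]_(m, N)) (w : 'cV[R]_N)
  (delta : R) (U : 'I_N -> R).

Local Notation u_basic := (u_basic Y Yt w delta U).
Local Notation q_basic := (q_basic Y Yt w delta U).
Local Notation u_hat := (u_hat Y Yt w).
Local Notation u_tilde := (u_tilde Y Yt w delta U).
Local Notation q_tilde := (q_tilde Y Yt w delta U).

Definition state_split (k : nat) : Prop := u_basic k = u_hat k + u_tilde k.

Lemma q_tilde_of_split {k : nat} : state_split k -> q_tilde k = q_basic k.
Proof.
rewrite /state_split /q_tilde /q_basic /w_tilde => ->.
by rewrite -mulrDl -dotvDr addrAC.
Qed.

Lemma state_splitP (k : nat) : state_split k.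
Proof.
elim: k => [|k IH]; first by rewrite /state_split /= addr0.
have Eq := q_tilde_of_split IH; rewrite /q_tilde /q_basic in Eq.
rewrite /state_split /= Eq IH /w_tilde scalerBl.
have regroup (a b c x q : 'cV[R]_m) : a + b + c - q = a + c - x + (b + (x - q)).
  by rewrite addrACA addKr (addrAC a).
exact: regroup.
Qed.

Lemma q_tilde_basic (k : nat) : q_tilde k = q_basic k.
Proof. exact: q_tilde_of_split (state_splitP k). Qed.

Lemma u_basic_sum (k : nat) :
  u_basic k = \sum_(i < k) (nent w i *: ncol Y i - q_basic i *: ncol Yt i).
Proof.
elim: k => [|k IH]; first by rewrite big_ord0.
by rewrite big_ord_recr /= -IH addrA.
Qed.

Lemma u_basic_final : u_basic N = Y *m w - Yt *m q_vec Y Yt w delta U.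
Proof.
rewrite u_basic_sum sumrB !mulmx_sum_col.
by congr (_ - _); apply: eq_bigr => j _; rewrite /ncol /nent valK // mxE.
Qed.

End TwoPhaseSPFQ.

Theorem mainTheorem1 (R : realType) (m N : nat) (Y Yt : 'M[R]_(m, N))
    (w : 'cV[R]_N) (delta : R) (U : 'I_N -> R) :
  (forall j : 'I_N, col j Yt != 0) ->
  0 < delta ->
  (forall j : 'I_N, 0 <= U j < 1) ->
  (forall j : 'I_N, q_tilde Y Yt w delta U j = q_basic Y Yt w delta U j) /\
  Y *m w - Yt *m q_vec Y Yt w delta U =
    u_hat Y Yt w N + u_tilde Y Yt w delta U N.
Proof.
move=> _ _ _; split; first by move=> j; exact: q_tilde_basic.
by rewrite -u_basic_final; exact: state_splitP.
Qed.
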